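(* Let $m,n\ge 1$. For $i=1,\ldots,m$ let $f_i:\mathbb{R}^n\to\mathbb{R}$ be convex and let $h_i:\mathbb{R}^n\to\mathbb{R}$ be convex and differentiable with $\nabla h_i$ Lipschitz continuous with constant $L_i>0$; put $F:=\sum_{i=1}^m(f_i+h_i)$. Let $g:\mathbb{R}^n\to\mathbb{R}$ be convex and differentiable with $\nabla g$ Lipschitz continuous with constant $L_g>0$, and assume $\min g=0$. Let $\mathcal{S}$ be the (assumed nonempty) solution set of $\min\{F(x):x\in\arg\min g\}$. Let $(\alpha_k)_{k\ge1}$, $(\beta_k)_{k\ge1}$ be positive sequences satisfying (H1)–(H4) below, $x_1\in\mathbb{R}^n$, and for $k\ge1$ define $$\varphi_{1,k}:=x_k-\alpha_k\beta_k\nabla g(x_k),\qquad \varphi_{i+1,k}:=\operatorname{prox}_{\alpha_k f_i}\big(\varphi_{i,k}-\alpha_k\nabla h_i(\varphi_{i,k})\big)\ (i=1,\ldots,m),\qquad x_{k+1}:=\varphi_{m+1,k}.$$ (H1) $\partial\big(\sum_{i=1}^m f_i+\delta_{\arg\min g}\big)=\sum_{i=1}^m\partial f_i+N_{\arg\min g}$; (H2) $\sum_k\alpha_k=+\infty$, $\sum_k\alpha_k^2<+\infty$; (H3) $0<\liminf_k\alpha_k\beta_k\le\limsup_k\alpha_k\beta_k<2/L_g$; (H4) for every $p\in\operatorname{ran}(N_{\arg\min g})$, $\sum_k\alpha_k\beta_k[g^*(p/\beta_k)-\sigma_{\arg\min g}(p/\beta_k)]<+\infty$. Let $u\in\mathcal{S}$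 and $p\in N_{\arg\min g}(u)$ be such that $0=p+\sum_{i=1}^m v_i+\sum_{i=1}^m\nabla h_i(u)$, where $v_i\in\partial f_i(u)$ for all $i$. Then for every $k\ge1$ and every $\eta>0$, \begin{align*} &\|x_{k+1}-u\|^2-\|x_k-u\|^2+\tfrac{\eta}{1+\eta}\alpha_k\beta_k g(x_k)+\Big(1-\tfrac{\eta}{1+\eta}\Big)\sum_{i=1}^m\|\varphi_{i+1,k}-\varphi_{i,k}\|^2\\ &\le \alpha_k\Big(\tfrac{2(1+\eta)}{\eta}\alpha_k-\tfrac{2}{\max_{1\le i\le m}L_i}\Big)\sum_{i=1}^m\|\nabla h_i(\varphi_{i,k})-\nabla h_i(u)\|^2\\ &\quad+\Big(\Big(1+\tfrac{\eta}{2(1+\eta)}\Big)\alpha_k\beta_k-\tfrac{2}{L_g(1+\eta)}\Big)\alpha_k\beta_k\|\nabla g(x_k)\|^2\\ &\quad+\tfrac{2m(m+1)(1+\eta)}{\eta}\alpha_k^2\sum_{i=1}^m\|\nabla h_i(u)+v_i\|^2\\ &\quad+\tfrac{\eta}{1+\eta}\alpha_k\beta_k\Big[g^*\Big(\tfrac{2p}{\frac{\eta}{1+\eta}\beta_k}\Big)-\sigma_{\arg\min g}\Big(\tfrac{2p}{\frac{\eta}{1+\eta}\beta_k}\Big)\Big]. \end{align*}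
   Context: For $r>0$ and convex $f$, $\operatorname{prox}_{rf}(x)$ is the unique minimizer of $u\mapsto f(u)+\frac{1}{2r}\|u-x\|^2$. $g^*$ is the Fenchel conjugate of $g$. For a nonempty set $X$, $\delta_X$ is the indicator function, $N_X(x)=\{w:\langle w,y-x\rangle\le0\ \forall y\in X\}$ for $x\in X$ the normal cone, $\operatorname{ran}(N_X)=\bigcup_{x\in X}N_X(x)$, and $\sigma_X(w)=\sup_{y\in X}\langle y,w\rangle$ the support function. $\partial$ is the convex subdifferential. The hypotheses (H1)–(H4) are standing assumptions of the paper. *)

From HB Require Import structures.
From mathcomp Require Import all_boot all_order all_algebra.
From mathcomp Require Import all_classical all_reals all_analysis.
Set Implicit Arguments. Unset Strict Implicit. Unset Printing Implicit Defensive.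
Import Order.TTheory GRing.Theory Num.Theory.
Local Open Scope classical_set_scope.
Local Open Scope ring_scope.

Section Defs.
Variables (R : realType) (n : nat).
Notation vec := 'rV[R]_n.

Definition dot (u v : vec) : R := \sum_(j < n) u 0 j * v 0 j.
Definition nrm2 (u : vec) : R := dot u u.
Definition nrm (u : vec) : R := Num.sqrt (nrm2 u).

Definition convex_fun (f : vec -> R) : Prop :=
  forall x y (t : R), 0 <= t -> t <= 1 ->
    f (t *: x + (1 - t) *: y) <= t * f x + (1 - t) * f y.

Definition has_gradient (f : vec -> R) (df : vec -> vec) : Prop :=
  forall x (eps : R), 0 < eps -> exists2 delta : R, 0 < delta &
    forall y, nrm (y - x) < delta ->
      `| f y - f x - dot (df x) (y - x) | <= eps * nrm (y - x).

Definition lipschitz_with (F : vec -> vec) (L : R) : Prop :=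
  forall x y, nrm (F x - F y) <= L * nrm (x - y).

Definition argmin (g : vec -> R) : set vec := [set x | forall y, g x <= g y].

Definition is_prox (r : R) (f : vec -> R) (x p : vec) : Prop :=
  forall w, f p + (2 * r)^-1 * nrm2 (p - x) <= f w + (2 * r)^-1 * nrm2 (w - x).

Definition subdiff (f : vec -> R) (x : vec) : set vec :=
  [set w | forall y, f x + dot w (y - x) <= f y].

Definition esubdiff (F : vec -> \bar R) (x : vec) : set vec :=
  [set w | F x \is a fin_num /\ forall y, (F x + (dot w (y - x))%:E <= F y)%E].

Definition deltaX (X : set vec) (x : vec) : \bar R :=
  if `[< X x >] then 0%E else +oo%E.

Definition normal_cone (X : set vec) (x : vec) : set vec :=
  [set w | X x /\ forall y, X y -> dot w (y - x) <= 0].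

Definition ran_normal (X : set vec) : set vec :=
  [set w | exists x, normal_cone X x w].

Definition fconj (g : vec -> R) (w : vec) : \bar R :=
  ereal_sup [set (dot w x - g x)%:E | x in [set: vec]].

Definition sigmaX (X : set vec) (w : vec) : \bar R :=
  ereal_sup [set (dot y w)%:E | y in X].

End Defs.

(* Each inner step is a forward-backward step: the prox inequality, the subgradient
   inequality for v_i at u and the three-point identity bound the progress
   |phi_(i+1) - u|^2 - |phi_i - u|^2 + |phi_(i+1) - phi_i|^2 by
   -2 alpha <grad h_i(phi_i) + v_i, phi_(i+1) - u>.  The part grad h_i(phi_i) - grad h_i(u)
   is absorbed by cocoercivity of grad h_i (Baillon-Haddad, obtained from the descent
   lemma) and Young's inequality.  The residuals grad h_i(u) + v_i are differences of
   consecutive tail sums, so their contributions telescope over the sweep to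
   2 alpha <p, phi_1 - u>, the tail sum from 1 being -p by optimality.  The penalty step
   phi_1 = x - alpha beta grad g(x) is handled by the convex combination
   theta (g x - g u) + (1 - theta) |grad g x|^2 / L_g <= <grad g x, x - u>, and the
   remaining 2 alpha <p, x - u> = theta alpha beta <w, x - u> is bounded by Fenchel-Young,
   <w, x> - g x <= g^*(w), together with sigma(w) = <u, w> for w in the normal cone at u. *)

From HB Require Import structures.
From mathcomp Require Import all_boot all_order all_algebra.
From mathcomp Require Import all_classical all_reals all_analysis.
From mathcomp Require Import ring lra.
Import Order.TTheory GRing.Theory Num.Theory.
Local Open Scope classical_set_scope.
Local Open Scope ring_scope.

Ltac row_eq := apply/rowP => ?; rewrite !mxE; ring.

Section Euclid.
Context {R : realType} {n : nat}.
Implicit Types (a b c : 'rV[R]_n) (s t : R).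

Lemma dotC a b : dot a b = dot b a.
Proof. by apply: eq_bigr => j _; rewrite mulrC. Qed.

Lemma dotDl a b c : dot (a + b) c = dot a c + dot b c.
Proof. by rewrite /dot -big_split; apply: eq_bigr => j _; rewrite mxE mulrDl. Qed.

Lemma dotNl a b : dot (- a) b = - dot a b.
Proof. by rewrite /dot -sumrN; apply: eq_bigr => j _; rewrite mxE mulNr. Qed.

Lemma dotZl s a b : dot (s *: a) b = s * dot a b.
Proof. by rewrite /dot mulr_sumr; apply: eq_bigr => j _; rewrite mxE mulrA. Qed.

Lemma dotBl a b c : dot (a - b) c = dot a c - dot b c.
Proof. by rewrite dotDl dotNl. Qed.

Lemma dotDr a b c : dot a (b + c) = dot a b + dot a c.
Proof. by rewrite dotC dotDl !(dotC a). Qed.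

Lemma dotNr a b : dot a (- b) = - dot a b.
Proof. by rewrite dotC dotNl dotC. Qed.

Lemma dotZr s a b : dot a (s *: b) = s * dot a b.
Proof. by rewrite dotC dotZl dotC. Qed.

Lemma dotBr a b c : dot a (b - c) = dot a b - dot a c.
Proof. by rewrite dotDr dotNr. Qed.

Lemma dot0l a : dot 0 a = 0.
Proof. by rewrite -(scale0r 0) dotZl mul0r. Qed.

Lemma nrm2_ge0 a : 0 <= nrm2 a.
Proof. by apply: sumr_ge0 => j _; rewrite -expr2 sqr_ge0. Qed.

Lemma nrm2_eq0 a : (nrm2 a == 0) = (a == 0).
Proof.
apply/idP/eqP => [|->]; last by rewrite /nrm2 dot0l.
rewrite psumr_eq0 => [/allP a0|j _]; last by rewrite -expr2 sqr_ge0.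
apply/rowP => j; apply/eqP; rewrite mxE -sqrf_eq0 expr2.
exact: implyP (a0 j (mem_index_enum j)) isT.
Qed.

Lemma nrm2D a b : nrm2 (a + b) = nrm2 a + 2 * dot a b + nrm2 b.
Proof. rewrite /nrm2 !dotDl !dotDr (dotC b a); ring. Qed.

Lemma nrm2B a b : nrm2 (a - b) = nrm2 a - 2 * dot a b + nrm2 b.
Proof. rewrite /nrm2 !dotDl !dotDr !dotNl !dotNr (dotC b a); ring. Qed.

Lemma nrm2N a : nrm2 (- a) = nrm2 a.
Proof. by rewrite /nrm2 dotNl dotNr opprK. Qed.

Lemma nrm2Z s a : nrm2 (s *: a) = s ^+ 2 * nrm2 a.
Proof. by rewrite /nrm2 dotZl dotZr mulrA expr2. Qed.

Lemma nrm_ge0 a : 0 <= nrm a.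
Proof. exact: sqrtr_ge0. Qed.

Lemma nrmZ s a : nrm (s *: a) = `|s| * nrm a.
Proof. by rewrite /nrm nrm2Z sqrtrM ?sqr_ge0 // sqrtr_sqr. Qed.

Lemma nrm2_subC a b : nrm2 (a - b) = nrm2 (b - a).
Proof. by rewrite -nrm2N opprB. Qed.

Lemma dot_three_point a b c :
  2 * dot (a - b) (b - c) = nrm2 (a - c) - nrm2 (b - c) - nrm2 (a - b).
Proof.
have -> : a - c = (a - b) + (b - c) by rewrite addrA subrK.
by rewrite nrm2D; ring.
Qed.

Lemma young a b s : 0 < s -> 2 * dot a b <= s * nrm2 a + s^-1 * nrm2 b.
Proof.
move=> s0; have := nrm2_ge0 (s *: a - b).
rewrite nrm2B nrm2Z dotZl => h.
have : 0 <= s^-1 * (s ^+ 2 * nrm2 a - 2 * (s * dot a b) + nrm2 b).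
  by rewrite mulr_ge0 // invr_ge0 ltW.
suff -> : s^-1 * (s ^+ 2 * nrm2 a - 2 * (s * dot a b) + nrm2 b) =
  s * nrm2 a + s^-1 * nrm2 b - 2 * dot a b by rewrite subr_ge0.
by field; rewrite gt_eqF.
Qed.

Lemma young_scaled a b s t : 0 < t ->
  2 * s * dot a b <= t / 2 * nrm2 a + 2 * s ^+ 2 / t * nrm2 b.
Proof.
move=> t0; have := young a (s *: b) (t / 2) (divr_gt0 t0 (ltr0n _ 2)).
rewrite dotZr nrm2Z invf_div mulrA.
by rewrite (_ : 2 * s ^+ 2 / t * nrm2 b = 2 / t * (s ^+ 2 * nrm2 b)) //; ring.
Qed.

Lemma dot_le_of_nrm2_le {a b s} : 0 < s -> nrm2 b <= s ^+ 2 * nrm2 a ->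
  dot a b <= s * nrm2 a.
Proof.
move=> s0 hb; have := young a b s s0.
have : s^-1 * nrm2 b <= s * nrm2 a.
  by rewrite mulrC ler_pdivrMr // mulrAC -expr2.
lra.
Qed.

Lemma lipschitz_nrm2 (F : 'rV[R]_n -> 'rV[R]_n) (L : R) a b : 0 <= L ->
  lipschitz_with F L -> nrm2 (F a - F b) <= L ^+ 2 * nrm2 (a - b).
Proof.
move=> L0 /(_ a b); rewrite /nrm => h.
rewrite -(sqr_sqrtr (nrm2_ge0 (F a - F b))) -(sqr_sqrtr (nrm2_ge0 (a - b))) -exprMn.
by rewrite ler_pXn2r // ?nnegrE ?mulr_ge0 ?sqrtr_ge0.
Qed.

Lemma nrm2_sum_le (I : Type) (r : seq I) (F : I -> 'rV[R]_n) :
  nrm2 (\sum_(l <- r) F l) <= (size r)%:R * \sum_(l <- r) nrm2 (F l).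
Proof.
elim: r => [|a r IH]; first by rewrite !big_nil /nrm2 dot0l mul0r.
rewrite !big_cons /=; case: r IH => [|b r] IH; first by rewrite !big_nil !addr0 mulr1n mul1r.
set S := \sum_(l <- b :: r) F l in IH *; set T := \sum_(l <- b :: r) nrm2 (F l) in IH *.
set N := (size (b :: r))%:R in IH *.
have N0 : 0 < N by rewrite ltr0n.
have := @young (F a) S N N0.
have : N^-1 * nrm2 S <= T by rewrite ler_pdivrMl.
rewrite nrm2D -natr1 -/N; lra.
Qed.

End Euclid.

Lemma ler_add_divSn {R : archiRealFieldType} {a b : R} (c : R) :
  (forall N : nat, a <= b + c / N.+1%:R) -> a <= b.
Proof.
move=> h; apply/ler_addgt0Pr => e e0.
apply: le_trans (h (Num.truncn (c / e))) _; rewrite lerD2l ler_pdivrMr //.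
by have := truncnS_gt (c / e); rewrite ltr_pdivrMr // mulrC => /ltW.
Qed.

Section Smooth.
Context {R : realType} {n : nat}.
Implicit Types (x y z d : 'rV[R]_n).
Context {f : 'rV[R]_n -> R} {df : 'rV[R]_n -> 'rV[R]_n}.
Hypotheses (f_convex : convex_fun f) (f_grad : has_gradient f df).

Lemma gradient_ineq x y : f x + dot (df x) (y - x) <= f y.
Proof.
set d := y - x; suff : dot (df x) d <= f y - f x by lra.
apply/ler_addgt0Pr => e e0.
have nd0 := nrm_ge0 d.
set e' := e / (nrm d + 1).
have e'0 : 0 < e' by rewrite divr_gt0 // ltr_wpDl.
have e'd : e' * nrm d <= e.
  by rewrite mulrAC ler_pdivrMr ?ltr_wpDl // ler_pM2l // lerDl.
have [del del0 near_x] := f_grad x e' e'0.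
set t := del / (del + nrm d).
have t0 : 0 < t by rewrite divr_gt0 // ltr_wpDr.
have t1 : t <= 1 by rewrite ler_pdivrMr ?ltr_wpDr // mul1r lerDl.
have td : t * nrm d < del.
  rewrite mulrAC ltr_pdivrMr ?ltr_wpDr //; nra.
have zx : t *: y + (1 - t) *: x - x = t *: d by rewrite /d; row_eq.
have := near_x (t *: y + (1 - t) *: x); rewrite zx nrmZ gtr0_norm // dotZr.
move=> /(_ td) /ler_normlP [hz _].
have := f_convex y x t (ltW t0) t1 => hcvx.
have : t * dot (df x) d <= t * (f y - f x + e' * nrm d) by lra.
rewrite ler_pM2l //; lra.
Qed.

Context {L : R}.
Hypotheses (L_gt0 : 0 < L) (df_lipschitz : lipschitz_with df L).

Lemma descent_increment x d (s t : R) : 0 <= s -> 0 < t ->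
  f (x + (s + t) *: d) - f (x + s *: d) <= t * dot (df x) d + L * (s + t) * t * nrm2 d.
Proof.
move=> s0 t0; set y := x + (s + t) *: d.
have st0 : 0 < s + t by rewrite ltr_wpDl.
have := gradient_ineq y (x + s *: d).
have -> : x + s *: d - y = (- t) *: d by rewrite /y; row_eq.
rewrite dotZr.
have lip : nrm2 (df y - df x) <= (L * (s + t)) ^+ 2 * nrm2 d.
  have -> : (L * (s + t)) ^+ 2 * nrm2 d = L ^+ 2 * nrm2 (y - x).
    by rewrite (_ : y - x = (s + t) *: d) ?nrm2Z; [ring | rewrite /y addrC addKr].
  exact: lipschitz_nrm2 (ltW L_gt0) df_lipschitz.
have := dot_le_of_nrm2_le (mulr_gt0 L_gt0 st0) lip.
rewrite dotC dotBl => /(ler_wpM2l (ltW t0)); lra.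
Qed.

(* Without integrals at hand, sum the increments of f over N equal pieces of the
   segment [x, z] and let N grow. *)
Lemma descent_lemma x z : f z <= f x + dot (df x) (z - x) + L / 2 * nrm2 (z - x).
Proof.
set d := z - x; suff : f z - f x - dot (df x) d <= L / 2 * nrm2 d by lra.
apply: (ler_add_divSn (L / 2 * nrm2 d)) => N.
set r := N.+1%:R^-1 : R; have r0 : 0 < r by rewrite invr_gt0.
have partial (j : nat) : f (x + (j%:R * r) *: d) - f x <=
    j%:R * r * dot (df x) d + L * nrm2 d * r ^+ 2 * (j%:R * (j%:R + 1)) / 2.
  elim: j => [|j IH]; first by rewrite mul0r scale0r addr0 subrr !(mul0r, mulr0).
  have := descent_increment x d (j%:R * r) r (mulr_ge0 (ler0n _ j) (ltW r0)) r0.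
  rewrite -natr1 mulrDl mul1r; lra.
have := partial N.+1; rewrite mulfV ?pnatr_eq0 // scale1r mul1r [x + d]addrC subrK.
suff -> : L * nrm2 d * r ^+ 2 * (N.+1%:R * (N.+1%:R + 1)) / 2 =
  L / 2 * nrm2 d + L / 2 * nrm2 d * r by lra.
by rewrite /r; field; rewrite addrC natr1 pnatr_eq0.
Qed.

Lemma gradient_lower_bound x y :
  f x + dot (df x) (y - x) + (2 * L)^-1 * nrm2 (df y - df x) <= f y.
Proof.
set G := df y - df x; set z := y - L^-1 *: G.
have lo := gradient_ineq x z.
have up := descent_lemma y z.
rewrite (_ : z - x = (y - x) - L^-1 *: G) ?dotBr ?dotZr in lo; last by rewrite /z; row_eq.
rewrite (_ : z - y = (- L^-1) *: G) ?dotZr ?nrm2Z in up; last by rewrite /z; row_eq.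
have eG : dot (df y) G = dot (df x) G + nrm2 G by rewrite {1}/G /nrm2 dotBl; ring.
have kL : L / 2 * (- L^-1) ^+ 2 = (2 * L)^-1 by field; rewrite gt_eqF.
have kL' : L^-1 = 2 * (2 * L)^-1 by field; rewrite gt_eqF.
rewrite eG mulrA kL mulrDr in up; rewrite kL' in lo up; rewrite dotBr; lra.
Qed.

Lemma gradient_cocoercive x y : L^-1 * nrm2 (df x - df y) <= dot (df x - df y) (x - y).
Proof.
have := gradient_lower_bound x y; have := gradient_lower_bound y x.
have -> : L^-1 = 2 * (2 * L)^-1 by field; rewrite gt_eqF.
rewrite (nrm2_subC (df y)) !dotBl !dotBr; lra.
Qed.

Lemma argmin_gradient_eq0 u : argmin f u -> df u = 0.
Proof.
move=> fu; apply/eqP; rewrite -nrm2_eq0 eq_le nrm2_ge0 andbT.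
have := descent_lemma u (u - L^-1 *: df u).
rewrite (_ : u - L^-1 *: df u - u = (- L^-1) *: df u) ?dotZr ?nrm2Z; last by row_eq.
have := fu (u - L^-1 *: df u).
have -> : L / 2 * ((- L^-1) ^+ 2 * nrm2 (df u)) = (2 * L)^-1 * nrm2 (df u).
  by field; rewrite gt_eqF.
have -> : - L^-1 * dot (df u) (df u) = - (2 * (2 * L)^-1 * nrm2 (df u)).
  by rewrite /nrm2; field; rewrite gt_eqF.
have : 0 < (2 * L)^-1 by rewrite invr_gt0 mulr_gt0.
nra.
Qed.

Lemma argmin_gradient_bound u x (t : R) : argmin f u -> 0 <= t <= 1 ->
  t * (f x - f u) + (1 - t) * (L^-1 * nrm2 (df x)) <= dot (df x) (x - u).
Proof.
move=> fu /andP [t0 t1].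
have h1 : f x - f u <= dot (df x) (x - u).
  have := gradient_ineq x u; rewrite -opprB dotNr; lra.
have h2 := gradient_cocoercive x u; rewrite (argmin_gradient_eq0 u fu) subr0 in h2.
have t1' : 0 <= 1 - t by rewrite subr_ge0.
move: h1 h2 => /(ler_wpM2l t0) h1 /(ler_wpM2l t1') h2; lra.
Qed.
End Smooth.

Lemma ge0_of_addrM_ge0 {R : realFieldType} (a b : R) :
  (forall t, 0 < t -> t <= 1 -> 0 <= a + t * b) -> 0 <= a.
Proof.
move=> h; rewrite leNgt; apply/negP => a0.
have := h 1 ltr01 (lexx _); rewrite mul1r => h1.
have b0 : 0 < b by lra.
have t0 : 0 < - a / (2 * b) by rewrite divr_gt0 ?oppr_gt0 // mulr_gt0.
have t1 : - a / (2 * b) <= 1 by rewrite ler_pdivrMr ?mulr_gt0 //; lra.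
have := h _ t0 t1.
have -> : a + - a / (2 * b) * b = a / 2 by field; rewrite gt_eqF.
lra.
Qed.

Section ProxSupport.
Context {R : realType} {n : nat}.
Implicit Types (f g : 'rV[R]_n -> R) (X : set 'rV[R]_n) (u w x z P : 'rV[R]_n).

Lemma prox_ineq {f} {r : R} {z P} : convex_fun f -> 0 < r -> is_prox r f z P ->
  forall w, r * (f P - f w) <= dot (z - P) (P - w).
Proof.
move=> f_convex r0 zP w; set c := (2 * r)^-1; have c0 : 0 < c by rewrite invr_gt0 mulr_gt0.
suff : 0 <= f w - f P + 2 * c * dot (P - z) (w - P).
  have -> : 2 * c = r^-1 by rewrite /c; field; rewrite gt_eqF.
  move=> /(mulr_ge0 (ltW r0)); rewrite mulrDr mulrA mulfV ?gt_eqF // mul1r.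
  by rewrite -(opprB z P) -(opprB P w) dotNl dotNr opprK; lra.
apply: ge0_of_addrM_ge0 (c * nrm2 (w - P)) _ => t t0 t1.
have := zP (t *: w + (1 - t) *: P).
rewrite (_ : t *: w + (1 - t) *: P - z = (P - z) + t *: (w - P)); last by row_eq.
rewrite (nrm2D (P - z)) nrm2Z dotZr -/c => hP.
have := f_convex w P t (ltW t0) t1 => hcvx.
have : 0 <= t * (f w - f P + 2 * c * dot (P - z) (w - P) + t * (c * nrm2 (w - P))) by lra.
by rewrite pmulr_rge0.
Qed.

Lemma fconj_ge g w x : ((dot w x - g x)%:E <= fconj g w)%E.
Proof. by apply: ereal_sup_ubound; exists x. Qed.

Lemma normal_coneZ {X u w} (s : R) : 0 <= s -> normal_cone X u w -> normal_cone X u (s *: w).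
Proof.
move=> s0 [Xu Nw]; split=> // y Xy.
by rewrite dotZl mulr_ge0_le0 // Nw.
Qed.

Lemma sigmaX_normal_cone {X u w} : normal_cone X u w -> sigmaX X w = (dot u w)%:E.
Proof.
move=> [Xu Nw]; apply/le_anti/andP; split; last by apply: ereal_sup_ubound; exists u.
apply: ge_ereal_sup => _ [y Xy <-]; rewrite lee_fin.
by have := Nw y Xy; rewrite dotBr !(dotC w); lra.
Qed.
End ProxSupport.

Section ForwardBackward.
Context {R : realType} {n : nat}.
Implicit Types (f h : 'rV[R]_n -> R) (d u v P S T phi : 'rV[R]_n).

Lemma prox_subdiff_ineq {f} {r : R} {phi d P u v} : convex_fun f -> 0 < r ->
  is_prox r f (phi - r *: d) P -> subdiff f u v ->
  nrm2 (P - u) - nrm2 (phi - u) + nrm2 (P - phi) <= - (2 * r * dot (d + v) (P - u)).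
Proof.
move=> f_convex r0 prox_P v_sub.
have := prox_ineq f_convex r0 prox_P u.
rewrite (_ : phi - r *: d - P = (phi - P) - r *: d); last by row_eq.
rewrite dotBl dotZl => hprox.
have := v_sub P => hv.
have : r * dot v (P - u) <= r * (f P - f u) by apply: ler_wpM2l; [exact: ltW | lra].
have := dot_three_point phi P u.
rewrite (nrm2_subC P phi) (dotDl d); lra.
Qed.

(* The residual [dh u + v] is written as a difference [S - T] so that, along a sweep
   where [S] and [T] are consecutive tail sums, the last term telescopes. *)
Lemma forward_backward_step {f h dh} {Lh Lmax r t : R} {phi P u v S T} :
  convex_fun f -> convex_fun h -> has_gradient h dh -> 0 < Lh -> Lh <= Lmax ->
  lipschitz_with dh Lh -> 0 < r -> 0 < t ->
  is_prox r f (phi - r *: dh phi) P -> subdiff f u v -> S - T = dh u + v ->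
  nrm2 (P - u) - nrm2 (phi - u) + nrm2 (P - phi)
  <= t * nrm2 (P - phi) + r * (2 / t * r - 2 / Lmax) * nrm2 (dh phi - dh u)
     + 2 / t * r ^+ 2 * nrm2 S + 2 * r * (dot S (u - phi) - dot T (u - P)).
Proof.
move=> f_convex h_convex h_grad Lh0 LhLmax h_lip r0 t0 prox_P v_sub eS.
set D := dh phi - dh u.
have := prox_subdiff_ineq f_convex r0 prox_P v_sub.
rewrite (_ : dh phi + v = D + (S - T)); last by rewrite eS /D addrA subrK.
have coco : Lmax^-1 * nrm2 D <= dot D (phi - u).
  apply: le_trans (gradient_cocoercive h_convex h_grad Lh0 h_lip phi u).
  by rewrite ler_wpM2r ?nrm2_ge0 // lef_pV2 ?posrE // (lt_le_trans Lh0).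
clearbody D.
have := young_scaled (phi - P) D r t t0.
have := young_scaled (phi - P) S r t t0.
have -> : dot (D + (S - T)) (P - u) = dot D (phi - u) - dot (phi - P) D
    - dot S (u - phi) - dot (phi - P) S + dot T (u - P).
  rewrite !(dotDl, dotBl, dotDr, dotBr, dotNl, dotNr).
  by rewrite (dotC phi D) (dotC P D) (dotC phi S) (dotC P S); ring.
move: coco => /(ler_wpM2l (ltW r0)).
rewrite nrm2_subC; lra.
Qed.
End ForwardBackward.

Section Penalty.
Context {R : realType} {n : nat}.

Lemma penalty_step_bound {g : 'rV[R]_n -> R} {dg} {Lg a b t : R} {u} (X p : 'rV[R]_n) :
  convex_fun g -> has_gradient g dg -> 0 < Lg -> lipschitz_with dg Lg -> argmin g u ->
  0 < a -> 0 < b -> 0 < t <= 1 ->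
  nrm2 (X - (a * b) *: dg X - u) + 2 * a * dot p (X - (a * b) *: dg X - u)
  <= nrm2 (X - u) - 2 * t * a * b * (g X - g u)
     + ((1 + t / 2) * a * b - 2 * (1 - t) / Lg) * a * b * nrm2 (dg X)
     + 2 / t * a ^+ 2 * nrm2 p + 2 * a * dot p (X - u).
Proof.
move=> g_convex g_grad Lg0 g_lip u_min a0 b0 /andP [t0 t1].
have := argmin_gradient_bound g_convex g_grad Lg0 g_lip u X t u_min.
rewrite (ltW t0) t1 => /(_ isT) /(ler_wpM2l (ltW (mulr_gt0 a0 b0))) hg.
have := young_scaled ((a * b) *: dg X) (- p) a t t0.
rewrite dotNr dotZl nrm2N nrm2Z => hy.
rewrite (_ : X - (a * b) *: dg X - u = (X - u) - (a * b) *: dg X); last by row_eq.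
rewrite (nrm2B (X - u)) nrm2Z dotZr (dotC (X - u)) (dotBr p (X - u)) dotZr.
rewrite (dotC p (dg X)); lra.
Qed.
End Penalty.

Section Iteration.
Context {R : realType} {n m : nat}.
Variables (f h : nat -> 'rV[R]_n -> R) (dh : nat -> 'rV[R]_n -> 'rV[R]_n) (L : nat -> R).
Variables (r t : R) (phi : nat -> 'rV[R]_n) (u : 'rV[R]_n) (v : nat -> 'rV[R]_n).
Hypotheses (f_convex : forall i, (1 <= i <= m)%N -> convex_fun (f i))
  (h_smooth : forall i, (1 <= i <= m)%N ->
     [/\ convex_fun (h i), has_gradient (h i) (dh i), 0 < L i & lipschitz_with (dh i) (L i)])
  (r_gt0 : 0 < r) (t_gt0 : 0 < t)
  (phi_prox : forall i, (1 <= i <= m)%N ->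
     is_prox r (f i) (phi i - r *: dh i (phi i)) (phi i.+1))
  (v_subdiff : forall i, (1 <= i <= m)%N -> subdiff (f i) u (v i)).

Let S i := \sum_(i <= l < m.+1) (dh l u + v l).
Let C := \sum_(1 <= l < m.+1) nrm2 (dh l u + v l).
Let Lmax := \big[Num.max/0]_(1 <= i < m.+1) L i.

Lemma nrm2_tail_sum_le i : (1 <= i)%N -> nrm2 (S i) <= m%:R * C.
Proof.
move=> i1; rewrite /S /C; apply: le_trans (nrm2_sum_le _ _ _) _; rewrite size_iota.
have c_ge0 j k : 0 <= \sum_(j <= l < k) nrm2 (dh l u + v l).
  by apply: sumr_ge0 => l _; exact: nrm2_ge0.
apply: ler_pM; [exact: ler0n | exact: c_ge0 | | ].
  by rewrite ler_nat leq_subLR addnC -addn1 leq_add2l.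
case: (leqP i m.+1) => im; last by rewrite big_geq ?c_ge0 // ltnW.
by rewrite [leRHS](big_cat_nat i1 im) /= lerDr.
Qed.

Lemma sweep_bound :
  nrm2 (phi m.+1 - u) - nrm2 (phi 1%N - u)
    + (1 - t) * \sum_(1 <= i < m.+1) nrm2 (phi i.+1 - phi i)
  <= r * (2 / t * r - 2 / Lmax) * \sum_(1 <= i < m.+1) nrm2 (dh i (phi i) - dh i u)
     + 2 / t * r ^+ 2 * (m%:R * m%:R) * C
     + 2 * r * dot (S 1%N) (u - phi 1%N).
Proof.
pose Phi i := nrm2 (phi i - u) + 2 * r * dot (S i) (u - phi i).
have step i : (1 <= i < m.+1)%N ->
    Phi i.+1 - Phi i + (1 - t) * nrm2 (phi i.+1 - phi i)
    <= r * (2 / t * r - 2 / Lmax) * nrm2 (dh i (phi i) - dh i u) + 2 / t * r ^+ 2 * (m%:R * C).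
  move=> /andP [i1 im]; have hi : (1 <= i <= m)%N by rewrite i1 -ltnS.
  have [h_convex h_grad L0 h_lip] := h_smooth i hi.
  have LLmax : L i <= Lmax by apply: le_bigmax_seq; rewrite ?mem_index_iota ?i1.
  have eS : S i - S i.+1 = dh i u + v i by rewrite /S big_ltn // addrK.
  have := forward_backward_step (f_convex i hi) h_convex h_grad L0 LLmax h_lip r_gt0 t_gt0
    (phi_prox i hi) (v_subdiff i hi) eS.
  have S_bound : 2 / t * r ^+ 2 * nrm2 (S i) <= 2 / t * r ^+ 2 * (m%:R * C).
    by apply: ler_wpM2l; [rewrite mulr_ge0 ?divr_ge0 ?sqr_ge0 ?ltW | exact: nrm2_tail_sum_le].
  rewrite /Phi; lra.
have := ler_sum_nat step.
rewrite big_split telescope_sumr // big_split /= -!mulr_sumr sumr_const_nat subn1 succnK.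
have S_last : S m.+1 = 0 by rewrite /S big_geq.
rewrite /Phi S_last dot0l -(mulr_natr C m); lra.
Qed.

Variables (g : 'rV[R]_n -> R) (dg : 'rV[R]_n -> 'rV[R]_n) (Lg b : R) (X p : 'rV[R]_n).
Hypotheses (g_convex : convex_fun g) (g_grad : has_gradient g dg) (Lg_gt0 : 0 < Lg)
  (g_lipschitz : lipschitz_with dg Lg) (u_min : argmin g u) (b_gt0 : 0 < b) (t_le1 : t <= 1)
  (phi_1 : phi 1%N = X - (r * b) *: dg X) (S_1 : S 1%N = - p).

Lemma iteration_bound :
  nrm2 (phi m.+1 - u) - nrm2 (X - u) + 2 * t * r * b * (g X - g u)
    + (1 - t) * \sum_(1 <= i < m.+1) nrm2 (phi i.+1 - phi i)
  <= r * (2 / t * r - 2 / Lmax) * \sum_(1 <= i < m.+1) nrm2 (dh i (phi i) - dh i u)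
     + ((1 + t / 2) * r * b - 2 * (1 - t) / Lg) * r * b * nrm2 (dg X)
     + 2 / t * (m%:R * m%:R + m%:R) * r ^+ 2 * C + 2 * r * dot p (X - u).
Proof.
have t01 : 0 < t <= 1 by rewrite t_gt0 t_le1.
have p_bound : 2 / t * r ^+ 2 * nrm2 p <= 2 / t * r ^+ 2 * (m%:R * C).
  apply: ler_wpM2l; first by rewrite mulr_ge0 ?divr_ge0 ?sqr_ge0 ?ltW.
  by rewrite -nrm2N -S_1 nrm2_tail_sum_le.
have := penalty_step_bound X p g_convex g_grad Lg_gt0 g_lipschitz u_min r_gt0 b_gt0 t01.
have := sweep_bound; rewrite S_1 phi_1 dotNl -dotNr opprB.
lra.
Qed.
End Iteration.

Lemma lee_EFin_add_mul_gap {R : realType} {l s c a b : R} {F G : \bar R} :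
  0 <= c -> (a%:E <= F)%E -> G = b%:E -> l <= s + c * (a - b) ->
  (l%:E <= s%:E + c%:E * (F - G))%E.
Proof.
move=> c0 aF -> h; apply: le_trans (_ : (s + c * (a - b))%:E <= _)%E; first by rewrite lee_fin.
rewrite EFinD EFinM EFinB leeD2l // lee_wpmul2l ?lee_fin //.
exact: leeD2r.
Qed.
Theorem lemmaA1 (R : realType) (m n : nat) (hm : (0 < m)%N) (hn : (0 < n)%N)
  (f h : nat -> 'rV[R]_n -> R) (dh : nat -> 'rV[R]_n -> 'rV[R]_n) (L : nat -> R)
  (g : 'rV[R]_n -> R) (dg : 'rV[R]_n -> 'rV[R]_n) (Lg : R)
  (alpha beta : nat -> R) (x : nat -> 'rV[R]_n) (phi : nat -> nat -> 'rV[R]_n)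
  (u p : 'rV[R]_n) (v : nat -> 'rV[R]_n) :
  (* data *)
  (forall i, (1 <= i <= m)%N -> convex_fun (f i)) ->
  (forall i, (1 <= i <= m)%N ->
     [/\ convex_fun (h i), has_gradient (h i) (dh i), 0 < L i & lipschitz_with (dh i) (L i)]) ->
  convex_fun g -> has_gradient g dg -> 0 < Lg -> lipschitz_with dg Lg ->
  (* min g = 0 *)
  (exists x0, g x0 = 0) -> (forall y, 0 <= g y) ->
  (* S nonempty *)
  (exists s, argmin g s /\ forall y, argmin g y ->
      \sum_(1 <= i < m.+1) (f i s + h i s) <= \sum_(1 <= i < m.+1) (f i y + h i y)) ->
  (* positive step sizes *)
  (forall k, (1 <= k)%N -> 0 < alpha k) -> (forall k, (1 <= k)%N -> 0 < beta k) ->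
  (* (H1) *)
  (forall y, esubdiff (fun z => ((\sum_(1 <= i < m.+1) f i z)%:E + deltaX (argmin g) z)%E) y
     = [set w | exists (ws : nat -> 'rV[R]_n) (q : 'rV[R]_n),
          [/\ forall i, (1 <= i <= m)%N -> subdiff (f i) y (ws i),
              normal_cone (argmin g) y q &
              w = \sum_(1 <= i < m.+1) ws i + q]]) ->
  (* (H2) *)
  (\sum_(1 <= k <oo) (alpha k)%:E = +oo)%E ->
  (\sum_(1 <= k <oo) (alpha k ^+ 2)%:E < +oo)%E ->
  (* (H3) *)
  (0 < limn_einf (fun k => (alpha k * beta k)%:E))%E ->
  (limn_einf (fun k => (alpha k * beta k)%:E) <= limn_esup (fun k => (alpha k * beta k)%:E))%E ->
  (limn_esup (fun k => (alpha k * beta k)%:E) < (2 / Lg)%:E)%E ->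
  (* (H4) *)
  (forall q, ran_normal (argmin g) q ->
     (\sum_(1 <= k <oo) ((alpha k * beta k)%:E *
        (fconj g ((beta k)^-1 *: q) - sigmaX (argmin g) ((beta k)^-1 *: q))) < +oo)%E) ->
  (* the algorithm *)
  (forall k, (1 <= k)%N -> phi 1%N k = x k - (alpha k * beta k) *: dg (x k)) ->
  (forall k i, (1 <= k)%N -> (1 <= i <= m)%N ->
     is_prox (alpha k) (f i) (phi i k - alpha k *: dh i (phi i k)) (phi i.+1 k)) ->
  (forall k, (1 <= k)%N -> x k.+1 = phi m.+1 k) ->
  (* u in S, p in N(u), v_i in subdifferentials, optimality *)
  argmin g u ->
  (forall y, argmin g y ->
      \sum_(1 <= i < m.+1) (f i u + h i u) <= \sum_(1 <= i < m.+1) (f i y + h i y)) ->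
  normal_cone (argmin g) u p ->
  (forall i, (1 <= i <= m)%N -> subdiff (f i) u (v i)) ->
  0 = p + \sum_(1 <= i < m.+1) v i + \sum_(1 <= i < m.+1) dh i u ->
  forall k, (1 <= k)%N -> forall eta : R, 0 < eta ->
  let theta := eta / (1 + eta) in
  let w := (theta * beta k)^-1 *: (2 *: p) in
  ((nrm2 (x k.+1 - u) - nrm2 (x k - u) + theta * alpha k * beta k * g (x k)
     + (1 - theta) * \sum_(1 <= i < m.+1) nrm2 (phi i.+1 k - phi i k))%:E
   <= (alpha k * (2 * (1 + eta) / eta * alpha k - 2 / \big[Num.max/0]_(1 <= i < m.+1) L i)
         * \sum_(1 <= i < m.+1) nrm2 (dh i (phi i k) - dh i u)
       + ((1 + eta / (2 * (1 + eta))) * alpha k * beta k - 2 / (Lg * (1 + eta)))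
         * alpha k * beta k * nrm2 (dg (x k))
       + 2 * m%:R * (m.+1)%:R * (1 + eta) / eta * alpha k ^+ 2
         * \sum_(1 <= i < m.+1) nrm2 (dh i u + v i))%:E
     + (theta * alpha k * beta k)%:E * (fconj g w - sigmaX (argmin g) w))%E.
Proof.
move=> f_convex h_smooth g_convex g_grad Lg0 g_lip [x0 g_x0] g_ge0 _ alpha_gt0 beta_gt0
  _ _ _ _ _ _ _ phi_1 phi_prox x_next u_min _ p_normal v_subdiff optimality k k1 eta eta0.
cbv zeta; set theta := eta / (1 + eta); set w := (theta * beta k)^-1 *: (2 *: p).
have [a0 b0] := (alpha_gt0 k k1, beta_gt0 k k1).
have eta1 : 0 < 1 + eta by rewrite addr_gt0.
have theta0 : 0 < theta by rewrite divr_gt0.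
have theta1 : 1 - theta = (1 + eta)^-1 by rewrite /theta; field; rewrite gt_eqF.
have g_u : g u = 0 by apply/le_anti; rewrite g_ge0 andbT -g_x0 u_min.
have residual_sum : \sum_(1 <= i < m.+1) (dh i u + v i) = - p.
  by apply/eqP; rewrite -addr_eq0 big_split /= [eqbLHS]addrC addrA addrAC -optimality.
have theta_le1 : theta <= 1 by rewrite -subr_ge0 theta1 invr_ge0 ltW.
have := iteration_bound f h dh L (alpha k) theta (phi^~ k) u v f_convex h_smooth a0 theta0
  (fun i => phi_prox k i k1) v_subdiff g dg Lg (beta k) (x k) p g_convex g_grad Lg0 g_lip
  u_min b0 theta_le1 (phi_1 k k1) residual_sum.
rewrite g_u subr0 -x_next // => bound.
have w_normal : normal_cone (argmin g) u w.
  rewrite /w; apply: normal_coneZ (normal_coneZ _ (ler0n _ 2) p_normal).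
  by rewrite invr_ge0 mulr_ge0 ?ltW.
apply: lee_EFin_add_mul_gap _ (fconj_ge g w (x k)) (sigmaX_normal_cone w_normal) _.
  exact/ltW/mulr_gt0/b0/mulr_gt0.
have gap : theta * alpha k * beta k * (dot w (x k) - dot u w) = 2 * alpha k * dot p (x k - u).
  by rewrite (dotC u) -dotBr /w !dotZl; field; rewrite !gt_eqF.
have [eta_nz eta1_nz] : eta != 0 /\ 1 + eta != 0 by rewrite !gt_eqF.
have -> : 2 * (1 + eta) / eta = 2 / theta by rewrite /theta; field; rewrite eta_nz eta1_nz.
have -> : eta / (2 * (1 + eta)) = theta / 2 by rewrite /theta; field; rewrite eta1_nz.
have -> : 2 / (Lg * (1 + eta)) = 2 * (1 - theta) / Lg by rewrite theta1; field; rewrite gt_eqF.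
have -> : 2 * m%:R * m.+1%:R * (1 + eta) / eta = 2 / theta * (m%:R * m%:R + m%:R).
  by rewrite -natr1 /theta; field; rewrite eta_nz eta1_nz.
lra.
Qed.
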